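(* For every fixed integer $k\geq 0$ there exist constants $q^*_k$ and $C^*_k$ (depending only on $k$) such that for all integers $q\geq q^*_k$, $$\frac{2^q}{\binom{q}{\leq k}} \;\leq\; F^*_k(q)\;\leq\; \frac{2^q}{\binom{q}{\leq k}}+C^*_k .$$
   Context: Pathological liar game: fix integers $q,k\geq 0$. A state is a vector $\vec{x}=(x_0,\ldots,x_k)$ of nonnegative integers ($x_i$ = number of elements currently carrying $i$ lies; elements with $k+1$ lies are discarded). In each of $q$ rounds Paul chooses a legal question $\vec{a}=(a_0,\ldots,a_k)$ with integers $0\leq a_i\leq x_i$, and Carole answers Y or N; the new state is $Y(\vec{x},\vec{a})=(a_0,\,a_1+x_0-a_0,\,\ldots,\,a_k+x_{k-1}-a_{k-1})$ or $N(\vec{x},\vec{a})=(x_0-a_0,\,x_1-a_1+a_0,\,\ldots,\,x_k-a_k+a_{k-1})$ respectively. Paul wins the pathological game iff after $q$ rounds the state satisfies $\sum_{i=0}^k x_i\geq 1$. $F^*_k(q)$ denotes the minimum $n$ such that Paul has a winning strategy in the $q$-round pathological liar game with $k$ lies and initial state $(n,0,\ldots,0)$. Notation: $\binom{q}{\leq m}=\sum_{j=0}^m\binom{q}{j}$. *)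

From mathcomp Require Import all_boot all_order all_algebra.
Set Implicit Arguments. Unset Strict Implicit. Unset Printing Implicit Defensive.

(* A state / question of the pathological liar game with k lies:
   a vector (x_0, ..., x_k) of natural numbers. *)
Definition lstate (k : nat) := {ffun 'I_k.+1 -> nat}.

Definition comp k (x : lstate k) (j : nat) : nat := x (inord j).

Definition legal k (x a : lstate k) : Prop := forall i : 'I_k.+1, a i <= x i.

Definition Yans k (x a : lstate k) : lstate k :=
  [ffun i : 'I_k.+1 => if val i == 0 then a i
                       else a i + (comp x (val i).-1 - comp a (val i).-1)].

Definition Nans k (x a : lstate k) : lstate k :=
  [ffun i : 'I_k.+1 => if val i == 0 then x i - a i
                       else (x i - a i) + comp a (val i).-1].

(* Paul wins the q-round pathological game from state x:
   after q rounds, whatever Carole answers, sum_i x_i >= 1. *)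
Fixpoint pwin k (q : nat) (x : lstate k) : Prop :=
  match q with
  | 0 => 1 <= \sum_(i < k.+1) x i
  | q'.+1 => exists a : lstate k,
      legal x a /\ pwin q' (Yans x a) /\ pwin q' (Nans x a)
  end.

Definition init_state k (n : nat) : lstate k :=
  [ffun i : 'I_k.+1 => if val i == 0 then n else 0].

Definition is_Fstar (k q n : nat) : Prop :=
  pwin q (init_state k n) /\ forall m, m < n -> ~ pwin q (init_state k m).

Definition binom_le (q m : nat) : nat := \sum_(j < m.+1) 'C(q, j).

(* Lower bound: give an element with [i] lies the weight [binom_le j (k - i)], the
   number of answer sequences of length [j] that do not discard it.  The weights of
   the two answers to a question add up to the weight before it, and a state that
   Paul wins in [j] rounds has weight at least [2 ^ j]; hence
   [F^*_k(q) * binom_le q k >= 2 ^ q].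

   Upper bound: let [n] be the least multiple of [2 ^ k] above [2 ^ q / binom_le q k].
   The first [k] questions split every class exactly in half.  Afterwards Paul halves
   each class of elements with fewer than [k] lies, which keeps these classes within
   [2 i + 1] of their expected sizes [n 'C(t, i) / 2 ^ t], and he uses the elements
   with [k] lies to keep the weight of both answers at least [2 ^ j]: by Vandermonde's
   identity the expected classes leave to the elements with [k] lies a fraction
   [~ 'C(t, k) / binom_le q k] of the weight, exponentially more than the polynomial
   error terms.  When a number [J] of rounds depending only on [k] is left, at most
   [2 k ^ 2] elements with fewer than [k] lies remain; giving them the words of a
   code of minimum distance [2 k + 1] makes their Hamming balls disjoint, and the
   Hamming bound lets a greedy strategy win from any state of weight [2 ^ J]. *)

From Pilot Require Import Defs.
From mathcomp Require Import all_boot all_order all_algebra.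
From mathcomp Require Import zify.
From Stdlib Require Import Classical.
Set Implicit Arguments. Unset Strict Implicit. Unset Printing Implicit Defensive.
(* Re-importing ssrfun shadows the component accessor of Defs by function composition. *)
Local Notation comp := Defs.comp.

(** * Partial sums of binomial coefficients *)

Lemma binom_le0 n : binom_le n 0 = 1.
Proof. by rewrite /binom_le big_ord_recl big_ord0 bin0. Qed.

Lemma binom_le_recr n m : binom_le n m.+1 = binom_le n m + 'C(n, m.+1).
Proof. by rewrite /binom_le big_ord_recr. Qed.

Lemma binom_leSS n m : binom_le n.+1 m.+1 = binom_le n m.+1 + binom_le n m.
Proof.
rewrite /binom_le big_ord_recl bin0.
under eq_bigr => i _ do rewrite /= binS.
by rewrite big_split /= addnA [in RHS]big_ord_recl bin0.
Qed.

Lemma binom_le0n m : binom_le 0 m = 1.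
Proof. by elim: m => [|m IH]; rewrite ?binom_le0 // binom_le_recr IH bin0n. Qed.

Lemma binom_le_gt0 n m : 0 < binom_le n m.
Proof. by rewrite /binom_le big_ord_recl bin0. Qed.

Lemma leq_bin_binom_le n m : 'C(n, m) <= binom_le n m.
Proof. by case: m => [|m]; rewrite ?binom_le0 ?bin0 // binom_le_recr leq_addl. Qed.

Lemma leq_binom_le2l n1 n2 m : n1 <= n2 -> binom_le n1 m <= binom_le n2 m.
Proof. by move=> le_n; apply: leq_sum => i _; apply: leq_bin2l. Qed.

Lemma leq_binom_le2r n m1 m2 : m1 <= m2 -> binom_le n m1 <= binom_le n m2.
Proof.
move/subnKC <-; elim: (m2 - m1) => [|d IH]; first by rewrite addn0.
by rewrite addnS binom_le_recr (leq_trans IH) ?leq_addr.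
Qed.

Lemma sum_binom_leS k n (f : nat -> nat) :
  \sum_(i < k.+1) (f i + (if (i : nat) is i'.+1 then f i' else 0)) * binom_le n (k - i) =
  \sum_(i < k.+1) f i * binom_le n.+1 (k - i).
Proof.
have splitS (i : 'I_k.+1) : f i * binom_le n.+1 (k - i) =
    f i * binom_le n (k - i) + (if i < k then f i * binom_le n (k - i).-1 else 0).
  case: ltnP => [lt_ik | le_ki].
    have -> : k - i = (k - i.+1).+1 by lia.
    by rewrite binom_leSS mulnDr.
  have -> : k - i = 0 by lia.
  by rewrite !binom_le0 addn0.
under eq_bigr do rewrite mulnDl.
under [RHS]eq_bigr do rewrite splitS.
rewrite !big_split /=; congr (_ + _).
rewrite big_ord_recl big_ord_recr /= ltnn add0n addn0.
by apply: eq_bigr => i _; rewrite /= ltn_ord /bump leq0n add1n subnS.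
Qed.

Lemma binom_le_vandermonde k n t : t <= n ->
  \sum_(i < k.+1) 'C(t, i) * binom_le (n - t) (k - i) = binom_le n k.
Proof.
elim: t => [|t IH] le_tn.
  by rewrite big_ord_recl bin0 mul1n !subn0 big1 ?addn0 // => i _; rewrite bin0n.
rewrite -IH; last by lia.
have -> : n - t = (n - t.+1).+1 by lia.
rewrite -(sum_binom_leS k (n - t.+1) (fun i => 'C(t, i))).
apply: eq_bigr => -[[|i] lt_ik] _ /=; first by rewrite !bin0 addn0.
by rewrite binS addnC.
Qed.

Lemma leq_exp2rW m n e : m <= n -> m ^ e <= n ^ e.
Proof. by move=> le_mn; elim: e => [|e IH] //; rewrite !expnS leq_mul. Qed.

Lemma leq_bin_exp n m : 'C(n, m) <= n ^ m.
Proof.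
have le_ffact : n ^_ m <= n ^ m.
  rewrite ffact_prod -[in X in _ <= _ ^ X](card_ord m) -prod_nat_const.
  by apply: leq_prod => i _; apply: leq_subr.
by rewrite (leq_trans _ le_ffact) // -bin_ffact leq_pmulr ?fact_gt0.
Qed.

Lemma leq_bin_exp2 n m : 'C(n, m) <= 2 ^ n.
Proof.
elim: n m => [|n IH] [|m]; rewrite ?bin0 ?bin0n ?expn_gt0 //.
by rewrite binS expnS mul2n -addnn leq_add.
Qed.

Lemma leq_exp_bin_fact n m : (n - m) ^ m <= 'C(n, m) * m`!.
Proof.
rewrite bin_ffact; elim: m => [|m IH] //; rewrite ffactnSr expnSr.
by apply: leq_mul; [apply: leq_trans IH; apply: leq_exp2rW | ]; lia.
Qed.

Lemma leq_binom_le_exp n m : binom_le n m <= n.+1 ^ m.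
Proof.
elim: m => [|m IH]; first by rewrite binom_le0.
rewrite binom_le_recr expnS mulSn.
apply: leq_add IH (leq_trans (leq_bin_exp _ _) _).
by rewrite expnS leq_mul2l leq_exp2rW ?orbT.
Qed.

Lemma exp2_dominates_poly c m : exists N, forall x, N <= x -> c * x.+1 ^ m <= 2 ^ x.
Proof.
exists (maxn (2 * m + 3) (c * 2 ^ m.+1 * m.+1`!)) => x; rewrite geq_max => /andP[le_mx le_cx].
set D := 2 ^ m.+1 * m.+1`!.
rewrite -(@leq_pmul2r D) ?muln_gt0 ?expn_gt0 ?fact_gt0 //.
have poly_le : c * x.+1 ^ m * D <= x.+1 ^ m.+1.
  rewrite expnSr mulnAC [X in X <= _]mulnC leq_mul2l.
  by rewrite /D mulnA (leq_trans le_cx) ?orbT.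
apply: (leq_trans poly_le); apply: (@leq_trans (2 ^ m.+1 * (x - m.+1) ^ m.+1)).
  by rewrite -expnMn leq_exp2rW //; lia.
rewrite /D mulnCA leq_pmul2l ?expn_gt0 //.
by apply: leq_trans (leq_exp_bin_fact _ _) _; rewrite leq_mul2r leq_bin_exp2 orbT.
Qed.

(** * Weights and the lower bound *)

Lemma val_inord n i : i <= n -> val (inord i : 'I_n.+1) = i.
Proof. exact: inordK. Qed.

Section Weight.
Variable k : nat.
Implicit Types (x a : lstate k) (f : nat -> nat).

Lemma comp_ord x (i : 'I_k.+1) : comp x i = x i.
Proof. by rewrite /comp inord_val. Qed.

Lemma lstate_ext x y : (forall i, i <= k -> comp x i = comp y i) -> x = y.
Proof. by move=> eq_xy; apply/ffunP => i; rewrite -!comp_ord eq_xy // -ltnS. Qed.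

Definition lstate_of f : lstate k := [ffun i : 'I_k.+1 => f i].

Lemma comp_lstate_of f i : i <= k -> comp (lstate_of f) i = f i.
Proof. by move=> le_ik; rewrite /comp ffunE val_inord. Qed.

Lemma legal_lstate_of x f : (forall i, i <= k -> f i <= comp x i) -> legal x (lstate_of f).
Proof. by move=> le_fx i; rewrite ffunE -comp_ord le_fx // -ltnS. Qed.

Lemma comp_init n i : i <= k -> comp (init_state k n) i = if i == 0 then n else 0.
Proof. by move=> le_ik; rewrite /comp ffunE val_inord. Qed.

Lemma comp_Yans x a i : i <= k ->
  comp (Yans x a) i = if i is i'.+1 then comp a i + (comp x i' - comp a i') else comp a 0.
Proof. by move=> le_ik; rewrite /comp ffunE val_inord //; case: i le_ik. Qed.

Lemma comp_Nans x a i : i <= k ->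
  comp (Nans x a) i = if i is i'.+1 then comp x i - comp a i + comp a i' else comp x 0 - comp a 0.
Proof. by move=> le_ik; rewrite /comp ffunE val_inord //; case: i le_ik. Qed.

(* An element with [i] lies can still lie [k - i] times; it accounts for the
   [binom_le j (k - i)] answer sequences of length [j] that do not discard it. *)
Definition weight j x := \sum_(i < k.+1) comp x i * binom_le j (k - i).

Lemma weight_recr j x :
  weight j x = \sum_(i < k) comp x i * binom_le j (k - i) + comp x k.
Proof. by rewrite /weight big_ord_recr /= subnn binom_le0 muln1. Qed.

Lemma weight0 x : weight 0 x = \sum_(i < k.+1) x i.
Proof. by apply: eq_bigr => i _; rewrite binom_le0n muln1 comp_ord. Qed.

Lemma weight_init j n : weight j (init_state k n) = n * binom_le j k.
Proof.
rewrite /weight big_ord_recl comp_init //= subn0 big1 ?addn0 // => i _.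
by rewrite comp_init // ltn_ord.
Qed.

Lemma weight_Yans_Nans j x a : legal x a ->
  weight j (Yans x a) + weight j (Nans x a) = weight j.+1 x.
Proof.
move=> legal_a; rewrite /weight -big_split -(sum_binom_leS k j (comp x)) /=.
apply: eq_bigr => -[i lt_ik] _ /=; rewrite -mulnDl; congr (_ * _).
have le_a j : comp a j <= comp x j := legal_a (inord j).
rewrite comp_Yans // comp_Nans //; have := le_a i.
by case: i lt_ik => [|i] lt_ik /=; [|have := le_a i]; lia.
Qed.

Lemma pwin_weight j x : pwin j x -> 2 ^ j <= weight j x.
Proof.
elim: j x => [|j IH] x /=; first by rewrite weight0.
move=> [a [legal_a [winY winN]]]; rewrite -(weight_Yans_Nans j legal_a) expnS mul2n -addnn.
exact: leq_add (IH _ winY) (IH _ winN).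
Qed.

End Weight.

(** * Hamming balls and the endgame *)

Fixpoint hamming (s t : seq bool) : nat :=
  match s, t with b :: s', c :: t' => (b != c) + hamming s' t' | _, _ => 0 end.

(* An item [(r, c)] is an element that may still lie [r] times and whose truthful
   answers to the remaining questions are the bits of [c] ([true] for Y). *)
Definition item := (nat * seq bool)%type.

Section Packing.
Implicit Types (e f : item) (T : seq item).

Definition truth e := head false e.2.
Definition survives b e := (truth e == b) || (0 < e.1).
Definition advance b e : item := (if truth e == b then e.1 else e.1.-1, behead e.2).
Definition after b T := map (advance b) (filter (survives b) T).

Definition disjoint_balls e f := e.1 + f.1 < hamming e.2 f.2.
Definition packing j T := all (fun e => size e.2 == j) T && pairwise disjoint_balls T.
Definition volume j T := \sum_(e <- T) binom_le j e.1.

Lemma volume_after j T : volume j.+1 T = volume j (after true T) + volume j (after false T).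
Proof.
rewrite /volume /after !big_map !big_filter !(big_mkcond (survives _)) -big_split /=.
apply: eq_bigr => -[[|r] c] _; rewrite /survives /advance /=.
  by case: (truth _); rewrite /= ?binom_le0 ?addn0.
by case: (truth _); rewrite /= binom_leSS // addnC.
Qed.

Lemma disjoint_balls_advance b e f : survives b e -> survives b f ->
  e.2 != [::] -> f.2 != [::] -> disjoint_balls e f -> disjoint_balls (advance b e) (advance b f).
Proof.
case: e f => r [|x s] [r' [|y s']] //; rewrite /survives /disjoint_balls /advance /truth /=.
by case: x; case: y; case: b => /=; lia.
Qed.

Lemma packing_after j b T : packing j.+1 T -> packing j (after b T).
Proof.
move=> /andP[/allP size_T pair_T]; apply/andP; split.
  apply/allP=> e' /mapP[e]; rewrite mem_filter => /andP[_ /size_T /eqP size_e] ->.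
  by rewrite size_behead size_e.
rewrite pairwise_map.
apply: (@sub_in_pairwise _ [pred e | survives b e & size e.2 == j.+1] disjoint_balls).
- move=> e f /andP[sv_e /eqP size_e] /andP[sv_f /eqP size_f].
  by apply: disjoint_balls_advance; rewrite // -size_eq0 ?size_e ?size_f.
- by apply/allP=> e; rewrite mem_filter => /andP[sv_e /size_T]; rewrite inE sv_e.
- exact: pairwise_filter.
Qed.

Lemma hamming_bound j T : packing j T -> volume j T <= 2 ^ j.
Proof.
elim: j T => [|j IH] T pack_T; last first.
  by rewrite volume_after expnS mul2n -addnn leq_add ?IH ?packing_after.
case: T pack_T => [|e [|f T]]; rewrite /volume ?big_nil ?big_cons ?big_nil ?binom_le0n //.
case/andP=> /and3P[/eqP size_e /eqP size_f _] /= /andP[/andP[disj _] _].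
by move: disj; rewrite /disjoint_balls; case: e.2 size_e; case: f.2 size_f.
Qed.

End Packing.

Lemma count_sum (T : Type) (a : pred T) s : count a s = \sum_(x <- s) a x.
Proof. by elim: s => [|x s IH]; rewrite ?big_nil ?big_cons //= IH. Qed.

Lemma count_andC (T : Type) (a b : pred T) s :
  count a s = count (fun x => a x && b x) s + count (fun x => a x && ~~ b x) s.
Proof. by elim: s => [|x s IH] //=; rewrite IH; case: (a x); case: (b x) => /=; lia. Qed.

Lemma count_after (a : pred item) b T :
  count a (after b T) = \sum_(e <- T) (survives b e && a (advance b e)).
Proof. by rewrite count_map count_filter count_sum; apply: eq_bigr => e _; rewrite andbC. Qed.

Section ItemStates.
Variable k : nat.
Implicit Types (T : seq item) (p pY : nat).

Definition radii_le T := all (fun e : item => e.1 <= k) T.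

Lemma radii_le_after b T : radii_le T -> radii_le (after b T).
Proof.
move=> /allP le_T; apply/allP=> e' /mapP[e]; rewrite mem_filter => /andP[_ /le_T le_e] ->.
by rewrite /advance /=; case: ifP; lia.
Qed.

(* Item [(r, c)] has [k - r] lies; the [p] further elements have [k] lies. *)
Definition state_of_items T p : lstate k :=
  lstate_of k (fun i => count (fun e : item => k - e.1 == i) T + (i == k) * p).

Definition items_question T pY : lstate k :=
  lstate_of k (fun i => count (fun e : item => (k - e.1 == i) && truth e) T + (i == k) * pY).

Lemma legal_items_question T p pY : pY <= p ->
  legal (state_of_items T p) (items_question T pY).
Proof.
move=> le_pY; apply: legal_lstate_of => i le_ik; rewrite comp_lstate_of //.
by apply: leq_add; [apply: sub_count => e /andP[] | rewrite leq_mul2l le_pY orbT].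
Qed.

Lemma Yans_items T p pY : radii_le T ->
  Yans (state_of_items T p) (items_question T pY) = state_of_items (after true T) pY.
Proof.
move=> /allP le_T; apply: lstate_ext => i le_ik; rewrite comp_Yans //.
case: i le_ik => [|i] le_ik.
  rewrite !comp_lstate_of // count_after count_sum; congr (_ + _).
  apply: eq_big_seq => -[r c] /le_T /=; rewrite /survives /advance /=.
  by case: (truth _) => /=; lia.
rewrite !comp_lstate_of ?(ltnW le_ik) //.
have -> : (i == k) = false by apply/negbTE; lia.
rewrite !mul0n !addn0 (count_andC (fun e : item => k - e.1 == i) truth) addKn.
rewrite count_after !count_sum addnAC -big_split; congr (_ + _).
apply: eq_big_seq => -[r c] /le_T /=; rewrite /survives /advance /=.
by case: (truth _) => /=; lia.
Qed.

Lemma Nans_items T p pY : radii_le T -> pY <= p ->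
  Nans (state_of_items T p) (items_question T pY) = state_of_items (after false T) (p - pY).
Proof.
move=> /allP le_T le_pY; apply: lstate_ext => i le_ik; rewrite comp_Nans //.
have split_i j : j <= k -> comp (state_of_items T p) j - comp (items_question T pY) j =
    count (fun e : item => (k - e.1 == j) && ~~ truth e) T + (j == k) * (p - pY).
  move=> le_jk; rewrite !comp_lstate_of // (count_andC _ truth).
  by case: (j == k); lia.
case: i le_ik => [|i] le_ik.
  rewrite split_i // comp_lstate_of // count_after !count_sum; congr (_ + _).
  apply: eq_big_seq => -[r c] /le_T /=; rewrite /survives /advance /=.
  by case: (truth _) => /=; lia.
rewrite split_i // !comp_lstate_of ?(ltnW le_ik) //.
have -> : (i == k) = false by apply/negbTE; lia.
rewrite !mul0n !addn0 count_after !count_sum addnAC -big_split; congr (_ + _).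
apply: eq_big_seq => -[r c] /le_T /=; rewrite /survives /advance /=.
by case: (truth _) => /=; lia.
Qed.

Lemma sum_state_of_items T p : \sum_(i < k.+1) state_of_items T p i = size T + p.
Proof.
under eq_bigr do rewrite ffunE.
rewrite big_split /=; congr (_ + _).
  under eq_bigr => i _ do rewrite count_sum.
  rewrite exchange_big /= -sum1_size; apply: eq_bigr => e _.
  have lt_k : k - e.1 < k.+1 by lia.
  rewrite (bigD1 (Ordinal lt_k)) //= eqxx big1 // => i ne_i.
  by case: eqP => // eq_i; case/negP: ne_i; apply/eqP/val_inj; rewrite /= eq_i.
rewrite big_ord_recr /= eqxx mul1n big1 // => i _.
by have := ltn_ord i; case: eqP => //=; lia.
Qed.

(* Paul sends to Y every item whose truthful answer is Y, and tops up with free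
   elements until the Y-side weight reaches [2 ^ j]; the Hamming bound guarantees that
   the N-side then still has enough free elements. *)
Lemma pwin_items j T p : packing j T -> radii_le T ->
  2 ^ j <= p + volume j T -> pwin j (state_of_items T p).
Proof.
elim: j T p => [|j IH] T p pack_T le_T win_w /=.
  rewrite sum_state_of_items addnC; move: win_w.
  by rewrite /volume (eq_bigr (fun _ => 1)) ?sum1_size // => e _; apply: binom_le0n.
have volY := hamming_bound (packing_after true pack_T).
have volN := hamming_bound (packing_after false pack_T).
rewrite volume_after in win_w.
set pY := 2 ^ j - volume j (after true T).
have le_pY : pY <= p by move: win_w; rewrite expnS /pY; lia.
exists (items_question T pY); split; first exact: legal_items_question.
rewrite Yans_items // Nans_items //.
split; apply: IH; rewrite ?packing_after ?radii_le_after //; move: win_w; rewrite expnS /pY; lia.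
Qed.

End ItemStates.

Lemma hamming_cat s1 s2 t1 t2 : size s1 = size t1 ->
  hamming (s1 ++ s2) (t1 ++ t2) = hamming s1 t1 + hamming s2 t2.
Proof. by elim: s1 t1 => [|b s1 IH] [|c t1] //= [/IH->]; rewrite addnA. Qed.

Lemma hamming_flatten_nseq d s t : size s = size t ->
  hamming (flatten (nseq d s)) (flatten (nseq d t)) = d * hamming s t.
Proof. by move=> eq_st; elim: d => [|d IH] //=; rewrite hamming_cat // IH mulSn. Qed.

Lemma hamming_map (T : Type) (f g : T -> bool) s :
  hamming (map f s) (map g s) = count (fun x => f x != g x) s.
Proof. by elim: s => [|x s IH] //=; rewrite IH. Qed.

Lemma size_flatten_nseq (T : Type) d (s : seq T) : size (flatten (nseq d s)) = d * size s.
Proof. by elim: d => [|d IH] //=; rewrite size_cat IH mulSn. Qed.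

(* The [l]-th word of a binary code with [M] words of length [J] and minimum
   distance [2 d]: the indicator of [l] in ['I_M], repeated [d] times, padded. *)
Definition rep_code d M J l :=
  flatten (nseq d (mkseq (fun i => i == l) M)) ++ nseq (J - d * M) false.

Lemma size_rep_code d M J l : d * M <= J -> size (rep_code d M J l) = J.
Proof. by move=> le_dM; rewrite size_cat size_flatten_nseq size_mkseq size_nseq; lia. Qed.

Lemma hamming_rep_code d M J l l' : l < M -> l != l' ->
  d <= hamming (rep_code d M J l) (rep_code d M J l').
Proof.
move=> lt_lM ne_l; rewrite hamming_cat ?size_flatten_nseq ?size_mkseq //.
rewrite hamming_flatten_nseq ?size_mkseq //; apply: leq_trans (leq_addr _ _) .
have : 0 < hamming (mkseq (fun i => i == l) M) (mkseq (fun i => i == l') M).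
  rewrite hamming_map -has_count; apply/hasP; exists l; first by rewrite mem_iota.
  by rewrite /= eqxx eq_sym (negbTE ne_l).
by rewrite -{1}[d]muln1 leq_mul2l => ->; rewrite orbT.
Qed.

Section Endgame.
Variable k : nat.

(* The lie budgets of a state with [f i] elements with [i] lies, [i < m]. *)
Fixpoint radii_list (f : nat -> nat) m : seq nat :=
  if m is m'.+1 then radii_list f m' ++ nseq (f m') (k - m') else [::].

Lemma size_radii_list f m : size (radii_list f m) = \sum_(i < m) f i.
Proof. by elim: m => [|m IH] /=; rewrite ?big_ord0 // size_cat IH size_nseq big_ord_recr. Qed.

Lemma radii_list_le f m r : r \in radii_list f m -> r <= k.
Proof.
elim: m => [|m IH] //=; rewrite mem_cat => /orP[/IH // | /nseqP[-> _]].
exact: leq_subr.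
Qed.

Lemma count_radii_list f m i : m <= k -> i <= k ->
  count (fun r => k - r == i) (radii_list f m) = if i < m then f i else 0.
Proof.
elim: m => [|m IH] //= le_mk le_ik; rewrite count_cat IH ?(ltnW le_mk) // count_nseq.
case: (ltngtP i m) => [lt_im | lt_mi | ->].
- have -> : k - (k - m) == i = false by apply/negbTE; lia.
  by rewrite ltnS (ltnW lt_im) mul0n addn0.
- have -> : k - (k - m) == i = false by apply/negbTE; lia.
  by rewrite ltnS leqNgt lt_mi.
- have -> : k - (k - m) = m by lia.
  by rewrite eqxx ltnSn mul1n.
Qed.

Lemma sum_binom_le_radii_list f m J :
  \sum_(r <- radii_list f m) binom_le J r = \sum_(i < m) f i * binom_le J (k - i).
Proof.
elim: m => [|m IH] /=; first by rewrite big_nil big_ord0.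
by rewrite big_cat IH big_nseq iter_addn_0 big_ord_recr mulnC.
Qed.

(* Give the [M] elements with fewer than [k] lies distinct words of a code of
   minimum distance [2 k + 1]: the Hamming balls of their lie budgets are disjoint. *)
Lemma pwin_endgame (x : lstate k) J M : \sum_(i < k) comp x i <= M -> (2 * k + 1) * M <= J ->
  2 ^ J <= weight J x -> pwin J x.
Proof.
move=> le_M le_J win_w.
set R := radii_list (comp x) k.
set T : seq item := [seq (nth 0 R l, rep_code (2 * k + 1) M J l) | l <- iota 0 (size R)].
have le_RM : size R <= M by rewrite size_radii_list.
have le_Rk l : nth 0 R l <= k.
  by case: (ltnP l (size R)) => [/(mem_nth 0)/radii_list_le // | /(nth_default 0)->].
have count_T i : count (fun e : item => k - e.1 == i) T = count (fun r => k - r == i) R.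
  by rewrite count_map -[in RHS](mkseq_nth 0 R) /mkseq count_map.
have -> : x = state_of_items k T (comp x k).
  apply: lstate_ext => i le_ik; rewrite comp_lstate_of // count_T count_radii_list //.
  case: ltnP => [lt_ik | le_ki]; first by rewrite (ltn_eqF lt_ik) addn0.
  have -> : i = k by lia.
  by rewrite eqxx mul1n.
apply: pwin_items.
- apply/andP; split; first by apply/allP => _ /mapP[l _ ->]; rewrite size_rep_code.
  rewrite pairwise_map.
  apply: (@sub_in_pairwise _ (mem (iota 0 (size R))) [rel l l' | l != l']); last 2 first.
  + by apply/allP.
  + by rewrite -uniq_pairwise iota_uniq.
  move=> l l'; rewrite mem_iota /= /disjoint_balls => lt_l _ ne_l.
  have := hamming_rep_code (2 * k + 1) J (leq_trans lt_l le_RM) ne_l.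
  by rewrite /=; have := le_Rk l; have := le_Rk l'; lia.
- by apply/allP=> e /mapP[l _ ->]; apply: le_Rk.
- have vol_T : volume J T = \sum_(i < k) comp x i * binom_le J (k - i).
    by rewrite /volume big_map -sum_binom_le_radii_list -/R -[in RHS](mkseq_nth 0 R) big_map.
  by rewrite vol_T addnC -weight_recr.
Qed.

End Endgame.

(** * The halving strategy *)

Section Halving.
Variable k : nat.
Implicit Types (x a : lstate k).

Lemma weight_Yans j x a : weight j (Yans x a) =
  \sum_(i < k.+1) comp a i * binom_le j (k - i) +
  \sum_(i < k) (comp x i - comp a i) * binom_le j (k - i.+1).
Proof.
rewrite /weight (eq_bigr (fun i : 'I_k.+1 => comp a i * binom_le j (k - i) +
   (if (i : nat) is i'.+1 then comp x i' - comp a i' else 0) * binom_le j (k - i))).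
  by rewrite big_split /= [X in _ + X]big_ord_recl /= mul0n add0n.
by move=> -[[|i] lt_ik] _; rewrite comp_Yans //= ?mulnDl ?mul0n ?addn0.
Qed.

Lemma weight_Nans j x a : weight j (Nans x a) =
  \sum_(i < k.+1) (comp x i - comp a i) * binom_le j (k - i) +
  \sum_(i < k) comp a i * binom_le j (k - i.+1).
Proof.
rewrite /weight (eq_bigr (fun i : 'I_k.+1 => (comp x i - comp a i) * binom_le j (k - i) +
   (if (i : nat) is i'.+1 then comp a i' else 0) * binom_le j (k - i))).
  by rewrite big_split /= [X in _ + X]big_ord_recl /= mul0n add0n.
by move=> -[[|i] lt_ik] _; rewrite comp_Nans //= ?mulnDl ?mul0n ?addn0.
Qed.

(* The weights that the two answers give to the elements with fewer than [k] lies
   when those are split in halves, the smaller half going to Y. *)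
Definition low_weightY j x := \sum_(i < k)
  (comp x i %/ 2 * binom_le j (k - i) + (comp x i - comp x i %/ 2) * binom_le j (k - i.+1)).
Definition low_weightN j x := \sum_(i < k)
  ((comp x i - comp x i %/ 2) * binom_le j (k - i) + comp x i %/ 2 * binom_le j (k - i.+1)).

(* The elements with [k] lies fill the Y-side up to weight [2 ^ j]. *)
Definition halving_question j x : lstate k := lstate_of k
  (fun i => if i < k then comp x i %/ 2 else minn (comp x k) (2 ^ j - low_weightY j x)).

Lemma legal_halving j x : legal x (halving_question j x).
Proof.
apply: legal_lstate_of => i le_ik; case: ltnP => [_ | le_ki]; first exact: leq_div.
have -> : i = k by lia.
exact: geq_minl.
Qed.

Lemma comp_halving j x i : i < k -> comp (halving_question j x) i = comp x i %/ 2.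
Proof. by move=> lt_ik; rewrite comp_lstate_of ?lt_ik // ltnW. Qed.

Lemma weight_Yans_halving j x : weight j (Yans x (halving_question j x)) =
  low_weightY j x + minn (comp x k) (2 ^ j - low_weightY j x).
Proof.
rewrite weight_Yans big_ord_recr /= comp_lstate_of // ltnn subnn binom_le0 muln1.
rewrite addnAC /low_weightY big_split /=.
by congr (_ + _ + _); apply: eq_bigr => i _; rewrite comp_halving.
Qed.

Lemma weight_Nans_halving j x : weight j (Nans x (halving_question j x)) =
  low_weightN j x + (comp x k - minn (comp x k) (2 ^ j - low_weightY j x)).
Proof.
rewrite weight_Nans big_ord_recr /= comp_lstate_of // ltnn subnn binom_le0 muln1.
rewrite addnAC /low_weightN big_split /=.
by congr (_ + _ + _); apply: eq_bigr => i _; rewrite comp_halving.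
Qed.

Lemma halves_balance X B1 B0 : B0 <= B1 ->
  X %/ 2 * B1 + (X - X %/ 2) * B0 <= (X - X %/ 2) * B1 + X %/ 2 * B0 <=
  X %/ 2 * B1 + (X - X %/ 2) * B0 + B1.
Proof.
have -> : X - X %/ 2 = X %/ 2 + odd X by rewrite {1}(divn_eq X 2) modn2; lia.
by case: (odd X) => le_B; rewrite /= ?addn0 ?mulnDl ?mul1n; apply/andP; split; lia.
Qed.

Lemma low_weight_balance j x :
  low_weightY j x <= low_weightN j x <= low_weightY j x + \sum_(i < k) binom_le j (k - i).
Proof.
rewrite -big_split; apply/andP; split; apply: leq_sum => i _;
  have /andP[] // := halves_balance (comp x i) (@leq_binom_le2r j _ _ (leq_sub2l k (leqnSn i))).
Qed.

(* The halves differ in weight by at most the sum, which the elements with [k] lies make up. *)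
Lemma weight_halving_children j x :
  \sum_(i < k) binom_le j (k - i) <= comp x k -> 2 ^ j.+1 <= weight j.+1 x ->
  2 ^ j <= weight j (Yans x (halving_question j x)) /\
  2 ^ j <= weight j (Nans x (halving_question j x)).
Proof.
move=> le_D win_w; have conserved := weight_Yans_Nans j (legal_halving j x).
rewrite weight_Yans_halving weight_Nans_halving in conserved *.
have /andP[le_YN le_NY] := low_weight_balance j x.
move: win_w le_D le_YN le_NY; rewrite -conserved expnS.
move: (2 ^ j) (low_weightY j x) (low_weightN j x) (comp x k) (\sum_(i < k) _) => P Y N X D.
lia.
Qed.

Lemma comp_halving_children j x i : i < k ->
  2 * comp (Yans x (halving_question j x)) i <=
    comp x i + (if i is i'.+1 then comp x i' + 1 else 0) + 1 /\
  2 * comp (Nans x (halving_question j x)) i <=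
    comp x i + (if i is i'.+1 then comp x i' + 1 else 0) + 1.
Proof.
move=> lt_ik; rewrite comp_Yans ?comp_Nans ?(ltnW lt_ik) //.
by case: i lt_ik => [|i] lt_ik; rewrite !comp_halving // ?(ltnW lt_ik); lia.
Qed.

End Halving.

Section MiddlePhase.
Variables k q n J : nat.
Implicit Types (x y : lstate k).

(* At round [t] the element counts [x_i], [i < k], exceed their "expected" values
   [n 'C(t, i) / 2 ^ t] by at most [2 i + 1]. *)
Definition near_binomial t x :=
  forall i, i < k -> comp x i * 2 ^ t <= n * 'C(t, i) + (2 * i + 1) * 2 ^ t.

Lemma near_binomial_step t x y : near_binomial t x ->
  (forall i, i < k -> 2 * comp y i <= comp x i + (if i is i'.+1 then comp x i' + 1 else 0) + 1) ->
  near_binomial t.+1 y.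
Proof.
move=> near_x le_y i lt_ik; have := le_y i lt_ik; have := near_x i lt_ik.
case: i lt_ik => [|i] lt_ik /=.
  rewrite expnS !bin0; move: (2 ^ t) => P near_0 le_0.
  have := leq_mul le_0 (leqnn P); move: (comp x 0) (comp y 0) near_0 le_0 => a b; nia.
have := near_x i (ltnW lt_ik); rewrite expnS binS; move: (2 ^ t) => P near_i near_Si le_Si.
have := leq_mul le_Si (leqnn P).
move: (comp x i) (comp x i.+1) (comp y i.+1) ('C(t, i)) ('C(t, i.+1)) near_i near_Si le_Si.
by move=> a0 a b c0 c1; nia.
Qed.

Lemma near_binomial_halving j t x : near_binomial t x ->
  near_binomial t.+1 (Yans x (halving_question j x)) /\
  near_binomial t.+1 (Nans x (halving_question j x)).
Proof.
move=> near_x; split; apply: near_binomial_step near_x _ => i lt_ik.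
- exact: (comp_halving_children j x lt_ik).1.
- exact: (comp_halving_children j x lt_ik).2.
Qed.

Definition middle_inv t x := near_binomial t x /\ 2 ^ (q - t) <= weight (q - t) x.

Hypothesis pool_budget : forall t, k <= t -> t + J < q ->
  \sum_(i < k) (n * 'C(t, i) + (2 * i + 1) * 2 ^ t) * binom_le (q - t) (k - i) +
  2 ^ t * \sum_(i < k) binom_le (q - t.+1) (k - i) <= 2 ^ q.
Hypothesis few_low_at_endgame : forall i, i < k -> n * 'C(q - J, i) < 2 ^ (q - J).
Hypothesis endgame_length : (2 * k + 1) * (2 * k * k) <= J.

Lemma middle_inv_pool t x : k <= t -> t + J < q -> middle_inv t x ->
  \sum_(i < k) binom_le (q - t.+1) (k - i) <= comp x k.
Proof.
move=> le_kt lt_tq [near_x win_w].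
have budget := pool_budget le_kt lt_tq.
have exp_q : 2 ^ t * 2 ^ (q - t) = 2 ^ q by rewrite -expnD; congr (_ ^ _); lia.
have low_le : 2 ^ t * \sum_(i < k) comp x i * binom_le (q - t) (k - i) <=
    \sum_(i < k) (n * 'C(t, i) + (2 * i + 1) * 2 ^ t) * binom_le (q - t) (k - i).
  rewrite big_distrr /=; apply: leq_sum => i _; rewrite mulnA [2 ^ t * _]mulnC.
  by rewrite leq_mul2r near_x ?orbT.
have := leq_mul (leqnn (2 ^ t)) win_w; rewrite weight_recr mulnDr exp_q => win_t.
rewrite -(@leq_pmul2l (2 ^ t)) ?expn_gt0 //.
by move: budget low_le win_t; move: (2 ^ t * _) (2 ^ t * comp x k) (2 ^ q) (\sum_(i < k) _); lia.
Qed.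

Lemma middle_inv_endgame x : middle_inv (q - J) x -> \sum_(i < k) comp x i <= 2 * k * k.
Proof.
move=> [near_x _]; apply: (@leq_trans (\sum_(i < k) 2 * k)); last first.
  by rewrite sum_nat_const card_ord mulnC.
apply: leq_sum => -[i lt_ik] _ /=; have := few_low_at_endgame lt_ik.
have := near_x i lt_ik; move: (2 ^ (q - J)) (expn_gt0 2 (q - J)) => P P_gt0 le_i lt_n.
have : comp x i * P < (2 * i + 2) * P by lia.
by rewrite ltn_pmul2r //; lia.
Qed.

Lemma pwin_middle d t x : t + J + d = q -> k <= t -> middle_inv t x -> pwin (q - t) x.
Proof.
elim: d t x => [|d IH] t x def_q le_kt inv_x.
  have def_J : q - t = J by lia.
  have [_ win_w] := inv_x; rewrite def_J in win_w *.
  have def_t : t = q - J by lia.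
  rewrite def_t in inv_x.
  exact: pwin_endgame (middle_inv_endgame inv_x) endgame_length win_w.
have pool := middle_inv_pool le_kt (ltac:(lia) : t + J < q) inv_x.
have def_j : q - t = (q - t.+1).+1 by lia.
case: inv_x; rewrite def_j /= => near_x win_w.
have [winY winN] := weight_halving_children pool win_w.
have [nearY nearN] := near_binomial_halving (q - t.+1) near_x.
have step y : near_binomial t.+1 y -> 2 ^ (q - t.+1) <= weight (q - t.+1) y -> pwin (q - t.+1) y.
  by move=> near_y win_y; apply: IH; [lia | lia | split].
exists (halving_question (q - t.+1) x); split; first exact: legal_halving.
by split; apply: step.
Qed.

End MiddlePhase.

(** * The first k rounds *)

Section InitialPhase.
Variables k m : nat.

Definition balanced_state t : lstate k := lstate_of k (fun i => m * 2 ^ (k - t) * 'C(t, i)).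

Definition balanced_question t : lstate k :=
  lstate_of k (fun i => m * 2 ^ (k - t.+1) * 'C(t, i)).

Lemma balanced_state0 : balanced_state 0 = init_state k (2 ^ k * m).
Proof.
apply: lstate_ext => i le_ik; rewrite comp_lstate_of // comp_init // subn0.
by case: i le_ik => [|i] _; rewrite ?bin0 ?muln1 ?bin0n ?muln0 // mulnC.
Qed.

Lemma answers_balanced t : t < k ->
  [/\ legal (balanced_state t) (balanced_question t),
      Yans (balanced_state t) (balanced_question t) = balanced_state t.+1 &
      Nans (balanced_state t) (balanced_question t) = balanced_state t.+1].
Proof.
move=> lt_tk; have halve c : m * 2 ^ (k - t) * c = 2 * (m * 2 ^ (k - t.+1) * c).
  have -> : k - t = (k - t.+1).+1 by lia.
  by rewrite expnS; lia.
split.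
- by apply: legal_lstate_of => i le_ik; rewrite comp_lstate_of // halve; lia.
- apply: lstate_ext => -[|i] le_ik; rewrite comp_Yans // !comp_lstate_of ?(ltnW le_ik) //.
    by rewrite !bin0.
  by rewrite halve binS; lia.
- apply: lstate_ext => -[|i] le_ik; rewrite comp_Nans // !comp_lstate_of ?(ltnW le_ik) //.
    by rewrite !bin0 halve; lia.
  by rewrite halve binS; lia.
Qed.

Lemma pwin_initial q : k <= q ->
  pwin (q - k) (balanced_state k) -> pwin q (init_state k (2 ^ k * m)).
Proof.
move=> le_kq win_k; rewrite -balanced_state0.
suff win_s s : s <= k -> pwin (q - (k - s)) (balanced_state (k - s)).
  by have := win_s k (leqnn k); rewrite subnn subn0.
elim: s => [|s IH] le_sk; first by rewrite subn0.
set t := k - s.+1; have def_t : k - s = t.+1 by rewrite /t; lia.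
have [legal_b eqY eqN] := answers_balanced (ltac:(lia) : t < k).
have -> : q - t = (q - t.+1).+1 by rewrite /t; lia.
exists (balanced_question t); rewrite eqY eqN -def_t.
by split=> //; split; apply: IH; lia.
Qed.

Lemma middle_inv_balanced q : k <= q -> 2 ^ q <= 2 ^ k * m * binom_le q k ->
  middle_inv q (2 ^ k * m) k (balanced_state k).
Proof.
move=> le_kq win_n; split.
  move=> i lt_ik; rewrite comp_lstate_of ?(ltnW lt_ik) // subnn muln1.
  by rewrite mulnAC [m * _]mulnC leq_addr.
rewrite /weight (eq_bigr (fun i : 'I_k.+1 => m * ('C(k, i) * binom_le (q - k) (k - i)))).
  rewrite -big_distrr /= binom_le_vandermonde //.
  by rewrite -(@leq_pmul2l (2 ^ k)) ?expn_gt0 // -expnD subnKC // mulnA.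
by move=> i _; rewrite comp_lstate_of ?subnn ?muln1 ?mulnA // -ltnS.
Qed.

End InitialPhase.

(** * Asymptotic estimates *)

Lemma binom_le_leq_bin k q t : 4 * k <= q -> q < 2 * t ->
  binom_le q k <= 4 ^ k * k`! * 'C(t, k).
Proof.
move=> le_kq lt_qt; apply: leq_trans (leq_binom_le_exp _ _) _.
apply: (@leq_trans ((4 * (t - k)) ^ k)); first by apply: leq_exp2rW; lia.
by rewrite expnMn -mulnA leq_mul2l [k`! * _]mulnC leq_exp_bin_fact orbT.
Qed.

Section Estimates.
Variables k q : nat.
Let K := 2 * k * k + k.
Let g := 4 ^ k * k`!.

(* The error terms of [pool_budget_holds] times [binom_le q k]: [2 ^ k] comes from
   rounding [n] up, [2 ^ t K binom_le j k] from the deviations and the pool.  They are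
   small because [2 ^ j] is huge when [t <= j], and ['C(t, k)] is comparable to
   [binom_le q k] when [j < t]. *)
Lemma error_terms_early t j : k <= t -> t + j = q ->
  t <= j -> ((2 ^ k + K) * (q.+1 ^ k * q.+1 ^ k)) ^ 2 <= 2 ^ q ->
  2 ^ k * (binom_le q k * binom_le q k) + 2 ^ t * K * binom_le j k * binom_le q k <=
  2 ^ q * 'C(t, k).
Proof.
move=> le_kt def_q le_tj small_q.
have exp_q : 2 ^ q = 2 ^ t * 2 ^ j by rewrite -expnD def_q.
have le_B : binom_le q k <= q.+1 ^ k := leq_binom_le_exp q k.
have le_Bj : binom_le j k <= q.+1 ^ k.
  by apply: leq_trans (leq_binom_le_exp j k) _; apply: leq_exp2rW; lia.
have small_j : (2 ^ k + K) * (q.+1 ^ k * q.+1 ^ k) <= 2 ^ j.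
  rewrite -leq_sqr (leq_trans small_q) // -expnM leq_pexp2l //; lia.
have C_gt0 : 0 < 'C(t, k) by rewrite bin_gt0.
rewrite exp_q; apply: leq_trans (leq_pmulr _ C_gt0).
apply: (@leq_trans (2 ^ t * ((2 ^ k + K) * (q.+1 ^ k * q.+1 ^ k)))); last first.
  by rewrite leq_mul2l small_j orbT.
rewrite mulnDl mulnDr leq_add //.
  by rewrite (leq_trans (leq_mul (leqnn _) (leq_mul le_B le_B))) // leq_pmull ?expn_gt0.
by rewrite -!mulnA !leq_mul2l (leq_mul le_Bj le_B) !orbT.
Qed.

Lemma error_terms_late t j : k <= t -> t + j = q -> j < t -> 4 * k <= q ->
  2 ^ k.+1 * g * q.+1 ^ k <= 2 ^ q -> 2 * K * g * j.+1 ^ k <= 2 ^ j ->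
  2 ^ k * (binom_le q k * binom_le q k) + 2 ^ t * K * binom_le j k * binom_le q k <=
  2 ^ q * 'C(t, k).
Proof.
move=> le_kt def_q lt_jt le_kq small_q small_j.
have exp_q : 2 ^ q = 2 ^ t * 2 ^ j by rewrite -expnD def_q.
have le_B : binom_le q k <= q.+1 ^ k := leq_binom_le_exp q k.
have le_Bg : binom_le q k <= g * 'C(t, k) by apply: binom_le_leq_bin; lia.
have main1 : 2 * (2 ^ k * (binom_le q k * binom_le q k)) <= 2 ^ q * 'C(t, k).
  apply: leq_trans (leq_mul small_q (leqnn _)); rewrite expnS.
  move: le_B le_Bg; move: (binom_le q k) (q.+1 ^ k) ('C(t, k)) (2 ^ k) => b P C a le_b le_bg.
  have := leq_mul (leq_mul (leqnn (2 * a)) le_b) le_bg; nia.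
have main2 : 2 * (2 ^ t * K * binom_le j k * binom_le q k) <= 2 ^ q * 'C(t, k).
  rewrite exp_q; have := leq_mul (leqnn (2 ^ t)) (leq_mul small_j (leqnn 'C(t, k))).
  have le_Bj := leq_binom_le_exp j k.
  have := leq_mul (leq_mul (leqnn (2 * 2 ^ t * K)) le_Bj) le_Bg.
  move: (binom_le q k) (binom_le j k) (j.+1 ^ k) ('C(t, k)) (2 ^ t) (2 ^ j) g K.
  by move=> b bj P C a c g' K'; nia.
lia.
Qed.

Lemma error_terms J t : 4 * k <= q ->
  ((2 ^ k + K) * (q.+1 ^ k * q.+1 ^ k)) ^ 2 <= 2 ^ q -> 2 ^ k.+1 * g * q.+1 ^ k <= 2 ^ q ->
  (forall j, J <= j -> 2 * K * g * j.+1 ^ k <= 2 ^ j) -> k <= t -> t + J <= q ->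
  2 ^ k * (binom_le q k * binom_le q k) + 2 ^ t * K * binom_le (q - t) k * binom_le q k <=
  2 ^ q * 'C(t, k).
Proof.
move=> le_kq small_q1 small_q2 small_J le_kt le_tq; have def_q : t + (q - t) = q by lia.
case: (leqP t (q - t)) => [le_tj | lt_jt].
  exact: error_terms_early.
by apply: error_terms_late => //; apply: small_J; lia.
Qed.

(* By Vandermonde the main terms add up to [n (binom_le q k - 'C(t, k))], which
   falls short of [2 ^ q] by about [2 ^ q 'C(t, k) / binom_le q k]. *)
Lemma pool_budget_holds n J :
  2 ^ q <= n * binom_le q k -> n * binom_le q k <= 2 ^ q + 2 ^ k * binom_le q k ->
  4 * k <= q -> ((2 ^ k + K) * (q.+1 ^ k * q.+1 ^ k)) ^ 2 <= 2 ^ q ->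
  2 ^ k.+1 * g * q.+1 ^ k <= 2 ^ q -> (forall j, J <= j -> 2 * K * g * j.+1 ^ k <= 2 ^ j) ->
  forall t, k <= t -> t + J < q ->
  \sum_(i < k) (n * 'C(t, i) + (2 * i + 1) * 2 ^ t) * binom_le (q - t) (k - i) +
  2 ^ t * \sum_(i < k) binom_le (q - t.+1) (k - i) <= 2 ^ q.
Proof.
move=> n_lb n_ub le_kq small_q1 small_q2 small_J t le_kt lt_tq; set j := q - t.
have errors := error_terms le_kq small_q1 small_q2 small_J le_kt (ltnW lt_tq).
have split_sum : \sum_(i < k) (n * 'C(t, i) + (2 * i + 1) * 2 ^ t) * binom_le j (k - i) =
    n * \sum_(i < k) 'C(t, i) * binom_le j (k - i) +
    2 ^ t * \sum_(i < k) (2 * i + 1) * binom_le j (k - i).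
  rewrite !big_distrr -big_split /=; apply: eq_bigr => i _.
  by rewrite mulnDl !mulnA [2 ^ t * _]mulnC.
have odd_sum : \sum_(i < k) (2 * i + 1) * binom_le j (k - i) <= k * (2 * k * binom_le j k).
  rewrite -[k in k * _]card_ord -sum_nat_const; apply: leq_sum => i _.
  by apply: leq_mul; [have := ltn_ord i; lia | apply: leq_binom_le2r; lia].
have pool_sum : \sum_(i < k) binom_le (q - t.+1) (k - i) <= k * binom_le j k.
  rewrite -[k in k * _]card_ord -sum_nat_const; apply: leq_sum => i _.
  by apply: leq_trans (leq_binom_le2l _ _) (leq_binom_le2r _ _); lia.
have vdm : \sum_(i < k) 'C(t, i) * binom_le j (k - i) + 'C(t, k) = binom_le q k.
  rewrite -(binom_le_vandermonde k (n := q) (t := t)) ?big_ord_recr /=; last by lia.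
  by rewrite subnn binom_le0 muln1.
rewrite split_sum.
have n_C := leq_mul n_lb (leqnn 'C(t, k)).
have B_gt0 := binom_le_gt0 q k.
move: errors n_C odd_sum pool_sum vdm n_ub B_gt0.
move: (\sum_(i < k) 'C(t, i) * _) (\sum_(i < k) (2 * i + 1) * _) (\sum_(i < k) binom_le _ _)
  (binom_le j k) ('C(t, k)) (binom_le q k) (2 ^ q) (2 ^ t) (2 ^ k) =>
  S1 S2 S3 Bj C B Q T E errors n_C odd_sum pool_sum vdm n_ub B_gt0.
have key : E * B + T * K * Bj <= n * C.
  rewrite -(leq_pmul2l B_gt0).
  have -> : B * (E * B + T * K * Bj) = E * (B * B) + T * K * Bj * B by nia.
  have -> : B * (n * C) = n * B * C by nia.
  exact: leq_trans errors n_C.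
rewrite /K in key; nia.
Qed.

End Estimates.

Lemma ltn_mul_half_quarter n B T G E C : 0 < B -> 0 < T ->
  n * B <= T * G + E * B -> 2 * G * C <= B -> 4 * E * C <= T -> n * C < T.
Proof.
move=> B_gt0 T_gt0 n_ub C_half C_quarter; rewrite -(ltn_pmul2r B_gt0).
have := leq_mul n_ub (leqnn C); have := leq_mul (leqnn T) C_half.
have := leq_mul C_quarter (leqnn B); nia.
Qed.

(* [n 'C(t, i)] is about [2 ^ t * 2 ^ J 'C(t, i) / binom_le q k], and for [i < k]
   the numerator [2 ^ J 'C(t, i)] is [O(q ^ (k - 1))] while [binom_le q k] is of
   order [q ^ k]. *)
Lemma few_low_holds k q n J :
  n * binom_le q k <= 2 ^ q + 2 ^ k * binom_le q k -> J <= q -> 2 * k + 1 <= q ->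
  2 ^ (J + k + 1) * k`! <= q.+1 -> 2 ^ (k + J + 2) * q.+1 ^ k <= 2 ^ q ->
  forall i, i < k -> n * 'C(q - J, i) < 2 ^ (q - J).
Proof.
move=> n_ub le_Jq le_kq small_J1 small_J2 i lt_ik; set t := q - J.
have exp_q : 2 ^ q = 2 ^ t * 2 ^ J by rewrite -expnD /t subnK.
have le_C : 'C(t, i) <= q.+1 ^ k.-1.
  apply: leq_trans (leq_bin_exp t i) _; apply: (@leq_trans (q.+1 ^ i)).
    by apply: leq_exp2rW; rewrite /t; lia.
  by apply: leq_pexp2l => //; lia.
have le_Ck : q.+1 ^ k.-1 <= q.+1 ^ k by apply: leq_pexp2l => //; lia.
have fact_gt0 : 0 < 2 ^ k * k`! by rewrite muln_gt0 expn_gt0 fact_gt0.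
have C_small1 : 2 * 2 ^ J * 'C(t, i) <= binom_le q k.
  rewrite -(leq_pmul2l fact_gt0).
  apply: (@leq_trans (2 ^ (J + k + 1) * k`! * q.+1 ^ k.-1)).
    have -> : 2 ^ (J + k + 1) = 2 ^ k * (2 * 2 ^ J) by rewrite !expnD expn1; lia.
    move: le_C; move: ('C(t, i)) (q.+1 ^ k.-1) (2 ^ J) (2 ^ k) k`! => C P G E F le_C.
    by have := leq_mul (leqnn (E * F * (2 * G))) le_C; nia.
  apply: (@leq_trans (q.+1 ^ k)).
    by rewrite -[k in X in _ <= X]prednK 1?expnS ?leq_mul2r ?small_J1 ?orbT //; lia.
  apply: (@leq_trans ((2 * (q - k)) ^ k)); first by apply: leq_exp2rW; lia.
  rewrite expnMn -mulnA leq_mul2l (leq_trans (leq_exp_bin_fact q k)) ?orbT //.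
  by rewrite mulnC leq_mul2l leq_bin_binom_le orbT.
have C_small2 : 4 * 2 ^ k * 'C(t, i) <= 2 ^ t.
  rewrite -(leq_pmul2r (expn_gt0 2 J)) -exp_q; apply: leq_trans _ small_J2.
  have -> : 2 ^ (k + J + 2) = 4 * 2 ^ k * 2 ^ J by rewrite !expnD; lia.
  by rewrite mulnAC leq_mul2l (leq_trans le_C le_Ck) orbT.
apply: (ltn_mul_half_quarter (binom_le_gt0 q k) (expn_gt0 2 t) _ C_small1 C_small2).
by rewrite -exp_q.
Qed.

(* The least multiple of [2 ^ k] exceeding [2 ^ q / binom_le q k]: the first [k]
   questions can then split every class evenly. *)
Definition n_upper k q := 2 ^ k * (2 ^ q %/ (2 ^ k * binom_le q k) + 1).

Lemma n_upper_bounds k q :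
  2 ^ q < n_upper k q * binom_le q k <= 2 ^ q + 2 ^ k * binom_le q k.
Proof.
set D := 2 ^ k * binom_le q k.
have D_gt0 : 0 < D by rewrite muln_gt0 expn_gt0 binom_le_gt0.
have -> : n_upper k q * binom_le q k = D * (2 ^ q %/ D) + D.
  by rewrite /n_upper mulnDr muln1 mulnDl mulnAC.
have := divn_eq (2 ^ q) D; have := ltn_pmod (2 ^ q) D_gt0.
by move: (2 ^ q %/ D) (2 ^ q %% D) (2 ^ q) => a b c; nia.
Qed.

Lemma pwin_n_upper k : exists qk, forall q, qk <= q -> pwin q (init_state k (n_upper k q)).
Proof.
set K := 2 * k * k + k; set g := 4 ^ k * k`!.
have [N3 small_J] := exp2_dominates_poly (2 * K * g) k.
set J := maxn N3 ((2 * k + 1) * (2 * k * k)).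
have [N1 small_q1] := exp2_dominates_poly ((2 ^ k + K) ^ 2) (4 * k).
have [N2 small_q2] := exp2_dominates_poly (2 ^ k.+1 * g) k.
have [N5 small_q5] := exp2_dominates_poly (2 ^ (k + J + 2)) k.
exists (maxn (maxn N1 N2) (maxn N5 (maxn (2 ^ (J + k + 1) * k`!) (J + 4 * k + 1)))) => q.
rewrite !geq_max => /and3P[/andP[le_N1 le_N2] le_N5 /andP[le_qJ1 le_qJ2]].
have [n_lb n_ub] := andP (n_upper_bounds k q).
have le_kq : k <= q by lia.
have small_q1' : ((2 ^ k + K) * (q.+1 ^ k * q.+1 ^ k)) ^ 2 <= 2 ^ q.
  rewrite expnMn -expnD -expnM (_ : (k + k) * 2 = 4 * k); last by lia.
  exact: small_q1.
have small_J' j : J <= j -> 2 * K * g * j.+1 ^ k <= 2 ^ j.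
  by move=> le_Jj; apply: small_J; apply: leq_trans le_Jj; apply: leq_maxl.
apply: (pwin_initial le_kq).
apply: (@pwin_middle _ _ (n_upper k q) J _ _ _ (q - J - k)); last first.
- exact: middle_inv_balanced le_kq (ltnW n_lb).
- exact: leqnn.
- by lia.
- exact: leq_maxr.
- apply: few_low_holds n_ub _ _ _ (small_q5 _ le_N5); lia.
- by apply: pool_budget_holds (ltnW n_lb) n_ub _ small_q1' (small_q2 _ le_N2) small_J'; lia.
Qed.

Lemma ex_minimal (P : nat -> Prop) m : P m ->
  exists n, n <= m /\ P n /\ forall n', n' < n -> ~ P n'.
Proof.
elim/ltn_ind: m => m IH P_m.
case: (classic (exists2 n', n' < m & P n')) => [[n' lt_n'm P_n'] | no_smaller].
  have [n [le_nn' rest]] := IH n' lt_n'm P_n'.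
  by exists n; split=> //; apply: leq_trans le_nn' (ltnW lt_n'm).
by exists m; split=> //; split=> // n' lt_n'm P_n'; apply: no_smaller; exists n'.
Qed.

Import Order.TTheory GRing.Theory Num.Theory.
Local Open Scope ring_scope.

Theorem theorem3 (k : nat) :
  exists (qk : nat) (Ck : rat), forall q : nat, (qk <= q)%N ->
    exists n : nat, is_Fstar k q n /\
      ((2 ^ q)%:R / (binom_le q k)%:R <= n%:R :> rat) /\
      (n%:R <= (2 ^ q)%:R / (binom_le q k)%:R + Ck :> rat).
Proof.
have [qk win_upper] := pwin_n_upper k.
exists qk, (2 ^ k)%:R => q le_qk.
have [n [le_n [win_n min_n]]] := @ex_minimal (fun m => pwin q (init_state k m)) _ (win_upper q le_qk).
exists n; split; first by split.
have lower := pwin_weight win_n; rewrite weight_init in lower.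
have upper := leq_trans (leq_mul le_n (leqnn _)) (proj2 (andP (n_upper_bounds k q))).
have B_gt0 : 0 < (binom_le q k)%:R :> rat by rewrite ltr0n binom_le_gt0.
split; first by rewrite ler_pdivrMr // -natrM ler_nat.
by rewrite -lerBlDr ler_pdivlMr // mulrBl -!natrM lerBlDr -natrD ler_nat.
Qed.
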